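(* Let $\Gamma\subset\mathbb{N}$ be a numerical semigroup of multiplicity (smallest nonzero element) at least $3$, with set of gaps $L=\mathbb{N}\setminus\Gamma$ and genus $\delta=|L|$, and let $\mathcal{O}=\k[\Gamma]$ be the ring of the monomial curve. Then for every $k\ge1$ \[d_k=\dim_\k\operatorname{Coker}\big(\operatorname{Hom}_{\mathcal{O}}(\omega^{\otimes k},\mathcal{O})\to\mathcal{O}\big)=|(k+1)L|+(2k+1)-\delta.\] Consequently $d_k>2k\delta$ if and only if $|(k+1)L|>(2k+1)(\delta-1)$.
   Context: Ground field $\k$ algebraically closed, characteristic $0$. $\k[\Gamma]=\bigoplus_{a\in\Gamma}\k t^a\subset K=\k((t))$ (or its localisation/completion). $(k+1)L$ denotes the sumset $L+\dots+L$ ($k+1$ summands) and $|\cdot|$ its cardinality. The dualising module is embedded in $K$ via $dt\mapsto 1$, giving the fractional ideal $\omega$ spanned by $\k[[t]]$ and the monomials $t^{-\ell-1}$, $\ell\in L$. The invariant $d_k$ is $\dim_\k\mathcal{O}/(\mathcal{O}:_K\omega^k)$, where $\omega^k$ is the $k$-th power of this fractional ideal and $\mathcal{O}:_K\omega^k=\{x\in K: x\omega^k\subset\mathcal{O}\}$ (the image of $\operatorname{Hom}(\omega^{\otimes k},\mathcal{O})$ in $\mathcal{O}$). *)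

From HB Require Import structures.
From mathcomp Require Import all_boot all_order all_algebra.
Set Implicit Arguments. Unset Strict Implicit. Unset Printing Implicit Defensive.
Import GRing.Theory.
Local Open Scope ring_scope.

(* Gamma = N \ L.  L is a gap set of a numerical semigroup iff it is a finite
   (duplicate-free) list with 0 not a gap and N \ L closed under addition.      *)
Definition numerical_gaps (L : seq nat) : Prop :=
  [/\ uniq L, (0 \notin L)%N & forall a b : nat, a \notin L -> b \notin L -> (a + b)%N \notin L].

Definition sumset (A B : seq nat) : seq nat := undup [seq (a + b)%N | a <- A, b <- B].
(* iter_sumset k L = (k+1)L = L + ... + L  (k+1 summands) *)
Fixpoint iter_sumset (k : nat) (L : seq nat) : seq nat :=
  if k is k'.+1 then sumset L (iter_sumset k' L) else undup L.

Section Laurent.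
Variable F : fieldType.
Variable L : seq nat.

(* Laurent polynomials t^{-N} p(t), represented as pairs (N, p). *)
Definition laur := (nat * {poly F})%type.
Definition lmul (x y : laur) : laur := ((x.1 + y.1)%N, x.2 * y.2).
Definition ladd (x y : laur) : laur :=
  ((x.1 + y.1)%N, x.2 * 'X^(y.1) + y.2 * 'X^(x.1)).
Definition lscale (c : F) (x : laur) : laur := (x.1, c *: x.2).
Definition lzero : laur := (0%N, 0).
Definition lone : laur := (0%N, 1).
(* equality of the represented elements of k((t)) *)
Definition lequiv (x y : laur) : bool := x.2 * 'X^(y.1) == y.2 * 'X^(x.1).
Definition lprod (s : seq laur) : laur := foldr lmul lone s.
Definition lsum (s : seq laur) : laur := foldr ladd lzero s.
Definition lcomb (c : seq F) (b : seq laur) : laur :=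
  lsum [seq lscale p.1 p.2 | p <- zip c b].

(* x lies in O = k[Gamma]: every monomial t^e occurring in x has e in Gamma *)
Definition in_kGamma (x : laur) : bool :=
  all (fun i => (x.2`_i != 0) ==> ((x.1 <= i)%N && ((i - x.1)%N \notin L)))
      (iota 0 (size x.2)).

(* x lies in omega = span of k[t] and the t^{-l-1}, l in L:
   every exponent e occurring in x satisfies e >= 0 or -e-1 in L *)
Definition in_omega (x : laur) : bool :=
  all (fun i => (x.2`_i != 0) ==> ((x.1 <= i)%N || ((x.1 - i).-1 \in L)))
      (iota 0 (size x.2)).

Definition in_omega_pow (k : nat) (y : laur) : Prop :=
  exists s : seq (seq laur),
    all (fun r => (size r == k) && all in_omega r) s /\ lequiv y (lsum (map lprod s)).

(* x lies in O :_K omega^k *)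
Definition in_colon (k : nat) (x : laur) : Prop :=
  forall y, in_omega_pow k y -> in_kGamma (lmul x y).

(* dim_k (A / B) = n, for k-subspaces B of A of the Laurent ring:
   there is a family b_1..b_n in A whose classes form a basis of A/B *)
Definition quot_dim (A B : laur -> Prop) (n : nat) : Prop :=
  exists b : seq laur,
    [/\ size b = n, (forall v, v \in b -> A v),
        (forall x, A x -> exists (c : seq F) (y : laur),
              [/\ size c = n, B y & lequiv x (ladd (lcomb c b) y)])
      & (forall c : seq F, size c = n -> B (lcomb c b) -> forall i, c`_i = 0)].

(* d_k = dim_k O / (O :_K omega^k) *)
Definition is_dk (k n : nat) : Prop :=
  quot_dim (fun x => in_kGamma x) (in_colon k) n.

End Laurent.

From HB Require Import structures.
From mathcomp Require Import all_boot all_order all_algebra.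
From mathcomp Require Import zify ring.
Set Implicit Arguments. Unset Strict Implicit. Unset Printing Implicit Defensive.
Import GRing.Theory Num.Theory.
Local Open Scope ring_scope.

(** The modules O, omega and omega^k are all spanned by monomials, hence so is
  the colon ideal O :_K omega^k: it consists of the series supported on
  E_k = {e | e + k Omega is contained in Gamma}, where Omega = N u (-1 - L) is
  the set of exponents of omega and k Omega its k-fold sumset.  As 0 lies in
  k Omega, E_k is contained in Gamma, and d_k = |Gamma \ E_k|: the monomials t^e,
  e in Gamma \ E_k, give a basis of the quotient.

  With Fr the Frobenius number, k Omega consists of the integers
  >= -(k-1)(Fr+1) together with the -k - t, t in kL.  Hence Gamma \ E_k is
  Gamma n [0, k Fr + k) together with the e >= k Fr + k such that
  e - k lies in (k+1)L.  When 1 and 2 are gaps, every 2 <= m < Fr is a sum of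
  two gaps, so (k+1)L contains all of [k+1, k Fr), and counting gives
  d_k = (k Fr + k - delta) + (|(k+1)L| - (k Fr - k - 1)). *)

Lemma big_zip_nth (R : nmodType) (S T : Type) (s0 : S) (t0 : T)
    (f : S -> T -> R) (s : seq S) (t : seq T) :
  size s = size t ->
  \sum_(p <- zip s t) f p.1 p.2 = \sum_(i < size s) f (nth s0 s i) (nth t0 t i).
Proof.
elim: s t => [|x s IH] [|y t] //=; first by rewrite big_nil big_ord0.
by move=> [st]; rewrite big_cons big_ord_recl IH.
Qed.

Lemma sumr_exists_neq0 (R : nmodType) (I : finType) (f : I -> R) :
  \sum_i f i != 0 -> exists i, f i != 0.
Proof.
move=> nz; apply/existsP; apply: contraR nz; rewrite negb_exists => /forallP zero.
by apply/eqP/big1 => i _; apply/eqP; have := zero i; rewrite negbK.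
Qed.

Lemma mem_bigmax_seq (s : seq nat) : s != [::] -> (\max_(i <- s) i)%N \in s.
Proof.
elim: s => [//|x [|y s] IH] _; first by rewrite big_seq1 mem_head.
by rewrite big_cons in_cons /maxn; case: ifP; rewrite ?IH ?eqxx ?orbT.
Qed.

Section LaurentCoefficients.
Variable F : fieldType.
Implicit Types (x y : laur F) (e : int).

Definition lcoef x e : F :=
  if 0 <= e + (x.1)%:Z then x.2`_(absz (e + (x.1)%:Z)) else 0.

Lemma lcoefE x (i : nat) : lcoef x (i%:Z - (x.1)%:Z) = x.2`_i.
Proof. by rewrite /lcoef subrK. Qed.

Lemma coefMXn_lcoef x (n : nat) e : 0 <= e + (x.1)%:Z + n%:Z ->
  (x.2 * 'X^n)`_(absz (e + (x.1)%:Z + n%:Z)) = lcoef x e.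
Proof.
move=> pos; rewrite coefMXn /lcoef; case: ifP => [lt|ge].
  by rewrite ifF //; apply/negbTE; lia.
by rewrite ifT; [congr (_ `_ _); lia | lia].
Qed.

Lemma lequivP x y : reflect (forall e, lcoef x e = lcoef y e) (lequiv x y).
Proof.
apply: (iffP eqP) => [eq_xy e|eq_c].
  have [pos|neg] := boolP (0 <= e + (x.1)%:Z + (y.1)%:Z).
    rewrite -(coefMXn_lcoef pos) -(@coefMXn_lcoef y x.1 e); last by lia.
    by rewrite eq_xy; congr (_ `_ _); lia.
  by rewrite /lcoef !ifF //; apply/negbTE; lia.
apply/polyP => i; pose e := i%:Z - (x.1)%:Z - (y.1)%:Z.
have -> : i = absz (e + (x.1)%:Z + (y.1)%:Z) by lia.
rewrite coefMXn_lcoef; last by lia.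
have -> : e + (x.1)%:Z + (y.1)%:Z = e + (y.1)%:Z + (x.1)%:Z by ring.
by rewrite coefMXn_lcoef ?eq_c //; lia.
Qed.

Lemma lcoefD x y e : lcoef (ladd x y) e = lcoef x e + lcoef y e.
Proof.
have [pos|neg] := boolP (0 <= e + (x.1)%:Z + (y.1)%:Z); last first.
  by rewrite /lcoef /= !ifF ?addr0 //; apply/negbTE; lia.
rewrite {1}/lcoef /= ifT; last by lia.
have -> : e + (x.1 + y.1)%N%:Z = e + (x.1)%:Z + (y.1)%:Z by lia.
rewrite coefD coefMXn_lcoef //.
have -> : e + (x.1)%:Z + (y.1)%:Z = e + (y.1)%:Z + (x.1)%:Z by ring.
by rewrite coefMXn_lcoef //; lia.
Qed.

Lemma lcoefZ c x e : lcoef (lscale c x) e = c * lcoef x e.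
Proof. by rewrite /lcoef /=; case: ifP; rewrite ?coefZ ?mulr0. Qed.

Lemma lcoef0 e : lcoef (lzero F) e = 0.
Proof. by rewrite /lcoef /=; case: ifP; rewrite ?coef0. Qed.

Lemma lcoef1 e : lcoef (lone F) e = (e == 0)%:R.
Proof.
rewrite /lcoef /= addr0; case: ifP => pos; last by rewrite (_ : e == 0 = false) //; lia.
by rewrite coef1; congr (_%:R); do 2 case: eqP => ? //; lia.
Qed.

Lemma lcoef_lsum (s : seq (laur F)) e : lcoef (lsum s) e = \sum_(x <- s) lcoef x e.
Proof.
by elim: s => [|x s IH]; rewrite ?big_nil ?lcoef0 // big_cons /= lcoefD IH.
Qed.

Lemma lcoef_lcomb (c : seq F) (b : seq (laur F)) e : size c = size b ->
  lcoef (lcomb c b) e = \sum_(i < size c) c`_i * lcoef (nth (lzero F) b i) e.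
Proof.
move=> sz; rewrite lcoef_lsum big_map; under eq_bigr do rewrite lcoefZ.
exact: (big_zip_nth 0 (lzero F) (fun a v => a * lcoef v e)).
Qed.

Lemma lcoef_lsum_neq0 (s : seq (laur F)) e :
  lcoef (lsum s) e != 0 -> exists2 x, x \in s & lcoef x e != 0.
Proof.
elim: s => [|x s IH] /=; first by rewrite lcoef0 eqxx.
rewrite lcoefD; have [->|nz _] := eqVneq (lcoef x e) 0; last by exists x; rewrite ?mem_head.
by rewrite add0r => /IH [y ys nz]; exists y; rewrite ?in_cons ?ys ?orbT.
Qed.

Lemma lcoef_neq0 x e : lcoef x e != 0 ->
  [/\ 0 <= e + (x.1)%:Z, (absz (e + (x.1)%:Z)%R < size x.2)%N
    & x.2`_(absz (e + (x.1)%:Z)) != 0].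
Proof.
rewrite /lcoef; case: ifP => [pos nz|_]; last by rewrite eqxx.
by split => //; rewrite ltnNge; apply: contra nz => ?; rewrite nth_default.
Qed.

Lemma lmulC x y : lmul x y = lmul y x.
Proof. by rewrite /lmul addnC mulrC. Qed.

Lemma lequiv_lmull x x' y : lequiv x x' -> lequiv (lmul x y) (lmul x' y).
Proof.
rewrite /lequiv /lmul /= !exprD => /eqP eq_x; apply/eqP.
by rewrite mulrACA eq_x mulrACA.
Qed.

Lemma lcoefM_neq0 x y e : lcoef (lmul x y) e != 0 ->
  exists e1 e2, [/\ e = e1 + e2, lcoef x e1 != 0 & lcoef y e2 != 0].
Proof.
rewrite {1}/lcoef /lmul /=; case: ifP => pos; last by rewrite eqxx.
set n := absz _; rewrite coefM => /sumr_exists_neq0 [j].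
rewrite mulf_eq0 negb_or => /andP[xj yj].
exists (j%:Z - (x.1)%:Z), ((n - j)%N%:Z - (y.1)%:Z); rewrite !lcoefE; split=> //.
by have := ltn_ord j; rewrite /n; lia.
Qed.

Definition lmono (a : int) : laur F :=
  if 0 <= a then (0%N, 'X^(absz a)) else (absz a, 1).

Lemma lcoef_lmono a e : lcoef (lmono a) e = (e == a)%:R.
Proof.
rewrite /lmono /lcoef; case: (boolP (0 <= a)) => a_ge0 /=; case: ifP => e_ge0;
  rewrite ?coefXn ?coef1; first [ by congr (_%:R); do 2 case: eqP => ? //; lia
                                | by rewrite (_ : e == a = false) //; apply/negbTE; lia ].
Qed.

Lemma lcoef_lmonoM a x e : lcoef (lmul (lmono a) x) e = lcoef x (e - a).
Proof.
rewrite /lmono /lmul /lcoef; case: (boolP (0 <= a)) => a_ge0 /=.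
  rewrite add0n coefXnM; case: ifP => pos; last by rewrite ifF //; apply/negbTE; lia.
  case: ifP => lt; first by rewrite ifF //; apply/negbTE; lia.
  by rewrite ifT; [congr (_ `_ _) | ]; lia.
by rewrite mul1r; have -> : e + (absz a + x.1)%N%:Z = e - a + (x.1)%:Z by lia.
Qed.

Lemma lcoef_lprod_lmono (r : seq int) e :
  lcoef (lprod (map lmono r)) e = (e == \sum_(a <- r) a)%:R.
Proof.
elim: r e => [|a r IH] e /=; first by rewrite big_nil lcoef1.
rewrite lcoef_lmonoM IH big_cons; set S := \sum_(_ <- r) _.
by congr (_%:R); do 2 case: eqP => ? //; lia.
Qed.

Definition supported (P : pred int) x := forall e, lcoef x e != 0 -> P e.

Lemma supportedD P x y : supported P x -> supported P y -> supported P (ladd x y).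
Proof.
move=> sx sy e; rewrite lcoefD; have [/sx //|x0] := boolP (lcoef x e != 0).
by rewrite negbK in x0; rewrite (eqP x0) add0r => /sy.
Qed.

Lemma supportedZ P c x : supported P x -> supported P (lscale c x).
Proof. by move=> sx e; rewrite lcoefZ mulf_eq0 negb_or => /andP[_ /sx]. Qed.

Lemma supported_lcomb P (c : seq F) (b : seq (laur F)) : size c = size b ->
  (forall v, v \in b -> supported P v) -> supported P (lcomb c b).
Proof.
move=> sz sb e; rewrite lcoef_lcomb // => /sumr_exists_neq0 [i].
rewrite mulf_eq0 negb_or => /andP[_]; apply/sb/mem_nth; rewrite -sz.
exact: ltn_ord.
Qed.

Lemma supported_lmono (P : pred int) a : P a -> supported P (lmono a).
Proof. by move=> Pa e; rewrite lcoef_lmono; have [-> | _] := eqVneq e a; rewrite ?eqxx. Qed.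

End LaurentCoefficients.

Section QuotientByCoefficients.
Variables (F : fieldType) (P : pred int) (D : seq int).
Hypotheses (D_uniq : uniq D) (D_sub : {subset D <= P}).
Variables A B : laur F -> Prop.
Hypothesis A_supp : forall x, A x <-> supported P x.
Hypothesis B_vanish :
  forall x, B x <-> supported P x /\ forall d, d \in D -> lcoef x d = 0.

Lemma lcoef_lcomb_lmono (c : seq F) e : size c = size D ->
  lcoef (lcomb c (map (@lmono F) D)) e = \sum_(i < size D) c`_i * (e == D`_i)%:R.
Proof.
move=> sz; rewrite lcoef_lcomb ?size_map // sz.
by apply: eq_bigr => i _; rewrite (nth_map 0) // lcoef_lmono.
Qed.

Lemma lcoef_lcomb_lmono_nth (c : seq F) j : size c = size D -> (j < size D)%N ->
  lcoef (lcomb c (map (@lmono F) D)) D`_j = c`_j.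
Proof.
move=> sz lt_j; rewrite lcoef_lcomb_lmono // (bigD1 (Ordinal lt_j)) //= eqxx mulr1.
rewrite big1 ?addr0 // => i ne_ij; rewrite nth_uniq // eq_sym.
by rewrite -(inj_eq val_inj) /= in ne_ij; rewrite (negbTE ne_ij) mulr0.
Qed.

Lemma quot_dim_monomials : quot_dim A B (size D).
Proof.
have supp_b v : v \in map (@lmono F) D -> supported P v.
  by case/mapP => d /D_sub Pd ->; apply: supported_lmono.
exists (map (@lmono F) D); split; first exact: size_map.
- by move=> v /supp_b /A_supp.
- move=> x /A_supp sx; pose c := map (lcoef x) D.
  have sz : size c = size D by rewrite size_map.
  exists c, (ladd x (lscale (-1) (lcomb c (map (@lmono F) D)))); split => //.
    apply/B_vanish; split.
      by apply: supportedD => //; apply/supportedZ/supported_lcomb; rewrite ?size_map.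
    move=> d /(nthP 0) [j lt_j <-].
    by rewrite lcoefD lcoefZ lcoef_lcomb_lmono_nth // (nth_map 0) // mulN1r subrr.
  by apply/lequivP => e; rewrite !lcoefD lcoefZ; ring.
- move=> c sz /B_vanish [_ van] i; have [lt_i|ge_i] := ltnP i (size D).
    by rewrite -lcoef_lcomb_lmono_nth // van // mem_nth.
  by rewrite nth_default // sz.
Qed.

Lemma quot_dim_size n : quot_dim A B n -> n = size D.
Proof.
move=> [b [sz_b Ab span indep]].
pose M := \matrix_(i < n, j < size D) lcoef (nth (lzero F) b i) D`_j.
pose comb (u : 'rV[F]_n) := lcomb [seq u 0 i | i <- enum 'I_n] b.
have sz_u (u : 'rV[F]_n) : size [seq u 0 i | i <- enum 'I_n] = n.
  by rewrite size_map size_enum_ord.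
have nth_u (u : 'rV[F]_n) (i : 'I_n) : [seq u 0 i | i <- enum 'I_n]`_i = u 0 i.
  rewrite (nth_map i) ?size_enum_ord //; congr (u 0 _).
  by apply: val_inj; rewrite /= nth_enum_ord.
have lcoef_comb u e :
    lcoef (comb u) e = \sum_(i < n) u 0 i * lcoef (nth (lzero F) b i) e.
  by rewrite lcoef_lcomb sz_u ?sz_b //; apply: eq_bigr => i _; rewrite nth_u.
have free : row_free M.
  rewrite -kermx_eq0; apply/eqP/row_matrixP => i; rewrite row0.
  set u := row i _; have uM : u *m M = 0 by rewrite -row_mul mulmx_ker row0.
  have Bu : B (comb u).
    apply/B_vanish; split.
      by apply/supported_lcomb => [|v /Ab /A_supp //]; rewrite sz_u sz_b.
    move=> d /(nthP 0) [j lt_j <-]; rewrite lcoef_comb.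
    transitivity ((u *m M) 0 (Ordinal lt_j)); last by rewrite uM mxE.
    by rewrite mxE; apply: eq_bigr => l _; rewrite /M !mxE.
  by apply/rowP => j; have := indep _ (sz_u u) Bu j; rewrite nth_u !mxE => ->.
have full : row_full M.
  rewrite -sub1mx; apply/row_subP => j.
  have /span [c [y [sz_c By eqv]]] : A (lmono F D`_j).
    by apply/A_supp/supported_lmono/D_sub/mem_nth.
  apply/submxP; exists (\row_(i < n) c`_i); apply/rowP => j'; rewrite !mxE.
  move/lequivP: eqv => /(_ D`_j'); rewrite lcoef_lmono lcoefD.
  have [_ ->] := proj1 (B_vanish y) By; last exact: mem_nth.
  rewrite addr0 lcoef_lcomb ?sz_c ?sz_b // nth_uniq // eq_sym => ->.
  by apply: eq_bigr => i _; rewrite /M !mxE.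
by rewrite -(eqP free) (eqP full).
Qed.

Lemma quot_dimP n : quot_dim A B n <-> n = size D.
Proof. by split=> [/quot_dim_size | ->]; last exact: quot_dim_monomials. Qed.

End QuotientByCoefficients.

Section MonomialSupports.
Variables (F : fieldType) (L : seq nat).
Implicit Types (x y : laur F) (e s : int).

Definition gamma_exp e : bool := (0 <= e) && (absz e \notin L).
Definition omega_exp e : bool := (0 <= e) || (absz (- e - 1) \in L).

Fixpoint omega_sum (k : nat) s : Prop :=
  if k is k'.+1 then exists a b, [/\ s = a + b, omega_exp a & omega_sum k' b]
  else s = 0.

Definition colon_exp k e : Prop := forall s, omega_sum k s -> gamma_exp (e + s).

Lemma in_kGammaP x : reflect (supported gamma_exp x) (in_kGamma L x).
Proof.
apply: (iffP allP) => [in_x e /lcoef_neq0 [pos lt nz]|supp i _].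
  have := in_x _ (etrans (mem_iota 0 _ _) lt); rewrite nz /= => /andP[le notL].
  by apply/andP; split; [lia | move: notL; congr (~~ (_ \in L)); lia].
apply/implyP; rewrite -lcoefE => /supp /andP[pos notL].
by apply/andP; split; [lia | move: notL; congr (~~ (_ \in L)); lia].
Qed.

Lemma in_omegaP x : reflect (supported omega_exp x) (in_omega L x).
Proof.
apply: (iffP allP) => [in_x e /lcoef_neq0 [pos lt nz]|supp i _].
  have := in_x _ (etrans (mem_iota 0 _ _) lt); rewrite nz /= => /orP[le|inL].
    by apply/orP; left; lia.
  apply/orP; have [//|neg] := boolP (0 <= e); first by left.
  by right; rewrite (_ : absz (- e - 1) = (x.1 - absz (e + (x.1)%:Z)%R)%N.-1) //; lia.
apply/implyP; rewrite -lcoefE => /supp /orP[pos|inL]; first by apply/orP; left; lia.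
have [//|lt] := leqP x.1 i.
by apply/orP; right; move: inL; congr (_ \in L); lia.
Qed.

Lemma omega_sum_lprod (r : seq (laur F)) e :
  all (in_omega L) r -> lcoef (lprod r) e != 0 -> omega_sum (size r) e.
Proof.
elim: r e => [|x r IH] e /=.
  by rewrite lcoef1 => _; case: (e =P 0) => // _; rewrite eqxx.
move=> /andP[/in_omegaP x_om r_om] /lcoefM_neq0 [e1 [e2 [-> nz1 nz2]]].
by exists e1, e2; split; [| exact: x_om | exact: IH].
Qed.

Lemma omega_sum_seq k s : omega_sum k s ->
  exists r : seq int, [/\ size r = k, all omega_exp r & s = \sum_(a <- r) a].
Proof.
elim: k s => [|k IH] s /=; first by move=> ->; exists [::]; rewrite big_nil.
move=> [a [b [-> om_a /IH [r [<- om_r ->]]]]].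
by exists (a :: r); rewrite /= om_a om_r big_cons.
Qed.

Lemma omega_sum0 k : omega_sum k 0.
Proof. by elim: k => [|k IH] //=; exists 0, 0; rewrite addr0. Qed.

Lemma gamma_exp_colon k e : colon_exp k e -> gamma_exp e.
Proof. by move=> /(_ 0 (omega_sum0 k)); rewrite addr0. Qed.

Lemma in_colonP k x :
  in_colon L k x <-> (forall e, lcoef x e != 0 -> colon_exp k e).
Proof.
split=> [col e nz_e s /omega_sum_seq [r [sz_r om_r ->]]|supp y [ss [ss_om eqv]]].
  pose y := lsum [:: lprod (map (@lmono F) r)].
  have y_pow : in_omega_pow L k y.
    exists [:: map (@lmono F) r]; split; last exact/lequivP.
    rewrite /= andbT size_map sz_r eqxx /=; apply/allP => _ /mapP [a a_r ->].
    by apply/in_omegaP/supported_lmono; move/allP: om_r; apply.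
  have y_mono : lequiv y (lmono F (\sum_(a <- r) a)).
    by apply/lequivP => e'; rewrite lcoef_lsum big_seq1 lcoef_lprod_lmono lcoef_lmono.
  move/in_kGammaP: (col y y_pow); apply; rewrite lmulC.
  by move/lequivP: (lequiv_lmull x y_mono) => ->; rewrite lcoef_lmonoM addrK.
apply/in_kGammaP => e /lcoefM_neq0 [e1 [e2 [-> nz1]]].
move/lequivP: eqv => ->; case/lcoef_lsum_neq0 => _ /mapP [r r_ss ->] nz2.
move/allP: ss_om => /(_ r r_ss) /andP [/eqP sz_r r_om].
by apply: (supp _ nz1); rewrite -sz_r; apply: omega_sum_lprod.
Qed.

End MonomialSupports.

Section SumsOfTwoGaps.
Local Open Scope nat_scope.
Variable L : seq nat.
Hypotheses (gap0 : 0 \notin L) (gap1 : 1 \in L) (gap2 : 2 \in L).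
Hypothesis notin_add : forall a b, a \notin L -> b \notin L -> a + b \notin L.
Variable mu : nat.
Hypotheses (mu_gt0 : 0 < mu) (mu_notin : mu \notin L).
Hypothesis lt_mu_gap : forall j, 0 < j < mu -> j \in L.

Lemma mu_gt1 : 1 < mu.
Proof. by case: mu mu_gt0 mu_notin => [|[|]] //; rewrite gap1. Qed.

Section NotSumOfTwoGaps.
Variable m : nat.
Hypotheses (m_gt1 : 1 < m) (not_sum : forall l, l \in L -> m - l \notin L).

Lemma mu_lt : mu < m.
Proof.
rewrite ltnNge; apply/negP => le_m; have := not_sum gap1.
by rewrite lt_mu_gap //; apply/andP; split; lia.
Qed.

(* For m < x < m + mu, the gap m + mu - x < mu yields x - mu = m - (m + mu - x) in Gamma. *)
Lemma notin_gt_of_notin_add_mu : m + mu \notin L -> forall x, m < x -> x \notin L.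
Proof.
move=> notin_m_mu; have lt_mu := mu_lt.
elim/ltn_ind => x IH lt_mx; case: (ltngtP x (m + mu)) => [lt_x|gt_x|-> //].
all: rewrite (_ : x = (x - mu) + mu); [apply: notin_add => // | lia].
  have j_gap : m + mu - x \in L by apply: lt_mu_gap; apply/andP; split; lia.
  by have := not_sum j_gap; rewrite (_ : m - (m + mu - x) = x - mu) //; lia.
by apply: IH; lia.
Qed.

Hypothesis smaller_sum_or_above : forall m', 1 < m' < m ->
  (exists2 l, l \in L & m' - l \in L) \/ (forall x, m' < x -> x \notin L).

(* If m is a gap, so is m - mu >= 2; writing m - mu = l + l' with gaps l, l'
   gives m + mu = (m - l) + (m - l') in Gamma. *)
Lemma notin_add_mu : m + mu \notin L.
Proof.
have lt_mu := mu_lt; have mu_gt1 := mu_gt1.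
have [notin_m|in_m] := boolP (m \notin L); first exact: notin_add.
have in_m_mu : m - mu \in L.
  by apply: contraNT in_m => /notin_add /(_ mu_notin); rewrite subnK // ltnW.
have ge2 : 1 < m - mu.
  case E : (m - mu) in_m_mu => [|[|n]] //; first by rewrite (negbTE gap0).
  move=> _; have := not_sum gap2; rewrite (_ : m - 2 = mu - 1); last by lia.
  by rewrite lt_mu_gap //; apply/andP; split; lia.
have lt_m : 1 < m - mu < m by apply/andP; split; lia.
case: (smaller_sum_or_above lt_m) => [[l in_l in_l']|above].
  have l_pos : 0 < l by case: l in_l {in_l'} => //; rewrite (negbTE gap0).
  have l'_pos : 0 < m - mu - l by case: (m - mu - l) in_l' => //; rewrite (negbTE gap0).
  have := notin_add (not_sum in_l) (not_sum in_l').
  by rewrite (_ : m - l + (m - (m - mu - l)) = m + mu) //; lia.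
by rewrite above in in_m; lia.
Qed.

End NotSumOfTwoGaps.

Lemma sum_two_gaps_or_above m : 1 < m ->
  (exists2 l, l \in L & m - l \in L) \/ (forall x, m < x -> x \notin L).
Proof.
elim/ltn_ind: m => m IH m_gt1.
have [/hasP [l in_l in_ml]|/hasPn not_sum] := boolP (has (fun l => m - l \in L) L).
  by left; exists l.
right; apply: (notin_gt_of_notin_add_mu m_gt1 not_sum).
by apply: notin_add_mu => // m' /andP[m'_gt1 lt_m']; apply: IH.
Qed.

End SumsOfTwoGaps.

Lemma mem_iter_sumset0 (L : seq nat) x : (x \in iter_sumset 0 L) = (x \in L).
Proof. exact: mem_undup. Qed.

Lemma mem_iter_sumsetS (L : seq nat) k x :
  reflect (exists2 l, l \in L & exists2 t, t \in iter_sumset k L & x = (l + t)%N)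
          (x \in iter_sumset k.+1 L).
Proof.
rewrite /= /sumset mem_undup.
apply: (iffP allpairsP) => [[[l t] /= [in_l in_t ->]]|[l in_l [t in_t ->]]].
  by exists l => //; exists t.
by exists (l, t).
Qed.

Lemma iter_sumset_uniq (L : seq nat) k : uniq (iter_sumset k L).
Proof. by case: k => [|k]; apply: undup_uniq. Qed.

Lemma iter_sumset_diag (L : seq nat) k : 1%N \in L -> k.+1 \in iter_sumset k L.
Proof.
move=> gap1; elim: k => [|k IH]; first by rewrite mem_iter_sumset0.
by apply/mem_iter_sumsetS; exists 1%N => //; exists k.+1.
Qed.

Lemma count_mem_iota (s : seq nat) n : uniq s -> {in s, forall x, x < n}%N ->
  count (mem s) (iota 0 n) = size s.
Proof.
move=> uniq_s lt_s; rewrite -size_filter; apply/perm_size/uniq_perm => //.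
  exact/filter_uniq/iota_uniq.
by move=> x; rewrite mem_filter mem_iota /=; case: (boolP (x \in s)) => // /lt_s.
Qed.

Lemma count_leq_iota a n : count (leq a) (iota 0 n) = (n - a)%N.
Proof.
elim: n => [//|n IH]; rewrite -addn1 iotaD count_cat IH /= add0n addn0.
by case: (leqP a n) => /= ?; lia.
Qed.

Section Frobenius.
Variables (L : seq nat) (Fr : nat).
Hypotheses (gap0 : 0%N \notin L) (Fr_gap : Fr \in L).
Hypothesis Fr_max : forall l, l \in L -> (l <= Fr)%N.

Lemma iter_sumset_bounds k x : x \in iter_sumset k L -> (k < x <= k.+1 * Fr)%N.
Proof.
have gap_pos l : l \in L -> (0 < l)%N by case: l => // in_0; move: gap0; rewrite in_0.
elim: k x => [|k IH] x.
  by rewrite mem_iter_sumset0 mul1n => in_x; rewrite gap_pos ?Fr_max.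
case/mem_iter_sumsetS => l in_l [t /IH bounds ->].
by have := gap_pos _ in_l; have := Fr_max in_l; rewrite mulSn; lia.
Qed.

Lemma omega_expP e : omega_exp L e <-> 0 <= e \/ exists2 l, l \in L & e = - (l.+1)%:Z.
Proof.
split=> [/orP[|in_l]|[pos|[l in_l ->]]]; first by left.
- have [|neg] := boolP (0 <= e); first by left.
  by right; exists (absz (- e - 1)) => //; lia.
- by apply/orP; left.
- by apply/orP; right; rewrite (_ : absz _ = l) //; lia.
Qed.

Lemma omega_sumP k s : omega_sum L k.+1 s <->
  (exists2 t, t \in iter_sumset k L & s = - (t + k.+1)%N%:Z) \/ - (k * Fr.+1)%N%:Z <= s.
Proof.
elim: k s => [|k IH] s.
  split=> [[a [b [-> /omega_expP om_a ->]]]|[[l]|pos]].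
  - rewrite addr0; case: om_a => [pos|[l in_l ->]]; first by right; lia.
    by left; exists l; rewrite ?mem_iter_sumset0 // addn1.
  - rewrite mem_iter_sumset0 => in_l ->; exists (- (l.+1)%:Z), 0.
    by split; [rewrite addr0 addn1 | apply/omega_expP; right; exists l | ].
  - by exists s, 0; split; [rewrite addr0 | apply/omega_expP; left; lia | ].
split=> [[a [b [-> /omega_expP om_a /IH om_b]]]|].
  case: om_a om_b => [pos|[l in_l ->]] [[t in_t ->]|ge_b].
  - by right; have := iter_sumset_bounds in_t; rewrite !mulSn; lia.
  - by right; rewrite mulSn; lia.
  - left; exists (l + t)%N; last by lia.
    by apply/mem_iter_sumsetS; exists l => //; exists t.
  - by right; have := Fr_max in_l; rewrite mulSn; lia.
case=> [[x /mem_iter_sumsetS [l in_l [t in_t ->]] ->]|ge_s].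
  exists (- (l.+1)%:Z), (- (t + k.+1)%N%:Z); split; first by lia.
    by apply/omega_expP; right; exists l.
  by apply/IH; left; exists t.
exists (- (Fr.+1)%:Z), (s + (Fr.+1)%:Z); split; first by lia.
  by apply/omega_expP; right; exists Fr.
by apply/IH; right; move: ge_s; rewrite mulSn; lia.
Qed.

(* For k > 0, the exponents of Gamma \ E_k (see [colon_expP]). *)
Definition coker_exp k (e : nat) : bool :=
  (e \notin L) && ((e < k * Fr + k) || (k <= e) && (e - k \in iter_sumset k L))%N.

Lemma coker_exp_lt k e : coker_exp k e -> (e < k * Fr + k + Fr.+1)%N.
Proof.
case/andP => _ /orP[lt|/andP[le /iter_sumset_bounds /andP[_ ub]]]; first by lia.
by move: ub; rewrite mulSn; lia.
Qed.

Lemma colon_expP k e : (0 < k)%N -> e \notin L ->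
  reflect (colon_exp L k e%:Z) (~~ coker_exp k e).
Proof.
case: k => // k _ notin_e; rewrite /coker_exp notin_e /=.
apply: (iffP idP) => [not_coker s /omega_sumP om_s|col]; last first.
  apply/negP; case/orP=> [lt|/andP[le /mem_iter_sumsetS [l in_l [t in_t eq_e]]]].
    have: omega_sum L k.+1 (Fr%:Z - e%:Z).
      by apply/omega_sumP; right; move: lt; rewrite mulSn; lia.
    by move/col; rewrite /gamma_exp addrC subrK Fr_gap andbF.
  have: omega_sum L k.+1 (- (t + k.+1)%N%:Z) by apply/omega_sumP; left; exists t.
  by move/col; rewrite /gamma_exp (_ : _ + _ = l%:Z) ?in_l ?andbF //; lia.
apply: contraNT not_coker; rewrite /gamma_exp negb_and negbK.
have [ge|lt _] := boolP (0 <= e%:Z + s); last first.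
  apply/orP; left; case: om_s => [[t /iter_sumset_bounds bnd eq_s]|ge_s].
    by move: bnd lt; rewrite eq_s mulSn; lia.
  by move: ge_s lt; rewrite !mulSn; lia.
move=> /= in_es; case: om_s => [[t in_t eq_s]|ge_s].
  apply/orP; right; apply/andP; split; first by lia.
  by apply/mem_iter_sumsetS; exists (absz (e%:Z + s)) => //; exists t => //; lia.
by apply/orP; left; have := Fr_max in_es; move: ge_s; rewrite !mulSn; lia.
Qed.

Definition coker_exps k : seq int :=
  [seq e%:Z | e <- filter (coker_exp k) (iota 0 (k * Fr + k + Fr.+1))].

Lemma coker_exps_uniq k : uniq (coker_exps k).
Proof.
by rewrite map_inj_uniq ?filter_uniq ?iota_uniq //; move=> m n [].
Qed.

Lemma mem_coker_exps k (e : nat) : (e%:Z \in coker_exps k) = coker_exp k e.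
Proof.
rewrite mem_map; last by move=> m n [].
by rewrite mem_filter mem_iota; case b: (coker_exp k e) => //=; rewrite add0n coker_exp_lt.
Qed.

Lemma coker_exps_gamma k : {subset coker_exps k <= gamma_exp L}.
Proof.
move=> d /mapP [e]; rewrite mem_filter => /andP[/andP[notin_e _] _] ->.
exact/andP.
Qed.

Lemma colon_exp_bad k e : (0 < k)%N ->
  colon_exp L k e <-> gamma_exp L e /\ e \notin coker_exps k.
Proof.
move=> k_gt0; split=> [col|[/andP[pos notin_e] not_coker]].
  have /andP[pos notin_e] := gamma_exp_colon col.
  split; first exact/andP.
  rewrite (_ : e = (absz e)%:Z) ?mem_coker_exps in col *; last by lia.
  exact/(colon_expP k_gt0 notin_e).
move: not_coker; rewrite (_ : e = (absz e)%:Z) ?mem_coker_exps; last by lia.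
exact/colon_expP.
Qed.

Lemma in_colon_vanishing (F : fieldType) k (x : laur F) : (0 < k)%N ->
  in_colon L k x <->
  supported (gamma_exp L) x /\ forall d, d \in coker_exps k -> lcoef x d = 0.
Proof.
move=> k_gt0; rewrite in_colonP; split=> [col|[supp van] e nz_e].
  split=> [e /col /gamma_exp_colon //|d coker_d]; apply: contraTeq coker_d.
  by move/col/(colon_exp_bad _ k_gt0) => [].
apply/(colon_exp_bad _ k_gt0); split; first exact: supp.
by apply: contra nz_e => /van ->.
Qed.

Hypotheses (gap1 : 1%N \in L) (gap2 : 2%N \in L).
Hypothesis notin_add : forall a b, a \notin L -> b \notin L -> (a + b)%N \notin L.

Lemma sum_two_gaps m : (1 < m < Fr)%N -> m \in iter_sumset 1 L.
Proof.
move=> /andP[m_gt1 lt_mF].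
have ex_mu : exists n, (0 < n)%N && (n \notin L).
  by exists Fr.+1; apply/andP; split=> //; apply/negP => /Fr_max; rewrite ltnn.
case: (ex_minnP ex_mu) => mu /andP[mu_gt0 mu_notin] mu_min.
have lt_mu_gap j : (0 < j < mu)%N -> j \in L.
  case/andP=> j_gt0 lt_j; apply: contraTT lt_j => notin_j.
  by rewrite -leqNgt mu_min // j_gt0.
case: (sum_two_gaps_or_above gap0 gap1 gap2 notin_add mu_gt0 mu_notin lt_mu_gap m_gt1).
  move=> [l in_l in_ml]; have lt_lm : (l < m)%N.
    by rewrite -subn_gt0; case: (m - l)%N in_ml => // in0; move: gap0; rewrite in0.
  apply/mem_iter_sumsetS; exists l => //; exists (m - l)%N.
    by rewrite mem_iter_sumset0.
  by rewrite subnKC // ltnW.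
by move/(_ _ lt_mF); rewrite Fr_gap.
Qed.

Lemma iter_sumset_interval k x : (0 < k)%N -> (k < x < k * Fr)%N -> x \in iter_sumset k L.
Proof.
have Fr_ge2 : (2 <= Fr)%N by apply: Fr_max.
elim: k x => [//|[|k] IH] x _ /andP[lt_kx lt_xF].
  by apply: sum_two_gaps; rewrite lt_kx -(mul1n Fr).
apply/mem_iter_sumsetS; have [le_xF|gt_xF] := leqP x (k.+1 * Fr).
  by exists 1%N => //; exists (x - 1)%N; [apply: IH => //; apply/andP; split | ]; lia.
case: k IH lt_kx lt_xF gt_xF => [|k] IH lt_kx lt_xF gt_xF.
  have [->|ne_x] := eqVneq x Fr.+1.
    have [Fr2|Fr_gt2] := eqVneq Fr 2%N.
      by exists 1%N => //; exists 2%N; rewrite ?Fr2 ?iter_sumset_diag.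
    exists 2%N => //; exists (Fr - 1)%N; [apply: IH => //; apply/andP; split | ]; lia.
  by exists Fr => //; exists (x - Fr)%N; [apply: IH => //; apply/andP; split | ]; lia.
exists Fr => //; exists (x - Fr)%N; [apply: IH => //; apply/andP; split | ]; try lia.
by move: gt_xF; nia.
Qed.

Lemma count_iter_sumset_lt k : (0 < k)%N ->
  (count (mem (iter_sumset k L)) (iota 0 (k * Fr)) + k.+1 = k * Fr)%N.
Proof.
move=> k_gt0; have Fr_ge2 : (2 <= Fr)%N by apply: Fr_max.
suff -> : count (mem (iter_sumset k L)) (iota 0 (k * Fr))
          = count (leq k.+1) (iota 0 (k * Fr)).
  by rewrite count_leq_iota; nia.
apply: eq_in_count => x.
rewrite mem_iota add0n => /andP[_ lt_x] /=; apply/idP/idP.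
  by case/iter_sumset_bounds/andP.
by move=> lt_kx; apply: iter_sumset_interval => //; rewrite lt_kx.
Qed.

Lemma count_coker_exp_high k : (0 < k)%N ->
  count (coker_exp k) (iota (k * Fr + k) Fr.+1)
  = count (mem (iter_sumset k L)) (iota (k * Fr) Fr.+1).
Proof.
move=> k_gt0; rewrite addnC iotaDl count_map; apply: eq_in_count => y.
rewrite mem_iota => /andP[le_y _] /=.
have notin_ky : k + y \notin L by apply/negP => /Fr_max; nia.
by rewrite /coker_exp notin_ky ltnNge (_ : k * Fr + k <= k + y)%N ?leq_addr ?addKn //; lia.
Qed.

Lemma size_iter_sumset_split k : size (iter_sumset k L) =
  (count (mem (iter_sumset k L)) (iota 0 (k * Fr))
   + count (mem (iter_sumset k L)) (iota (k * Fr) Fr.+1))%N.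
Proof.
rewrite -count_cat -iotaD count_mem_iota ?iter_sumset_uniq // => x.
by case/iter_sumset_bounds/andP => _; rewrite mulSn; lia.
Qed.

Hypothesis L_uniq : uniq L.

Lemma count_coker_exp_low k : (0 < k)%N ->
  (count (coker_exp k) (iota 0 (k * Fr + k)) + size L = k * Fr + k)%N.
Proof.
move=> k_gt0; rewrite -(count_mem_iota L_uniq (n := k * Fr + k)); last first.
  by move=> l /Fr_max; nia.
rewrite -[RHS](size_iota 0) -(count_predC (mem L)) addnC; congr (_ + _)%N.
apply: eq_in_count => e; rewrite mem_iota add0n => /andP[_ lt_e].
by rewrite /coker_exp lt_e andbT.
Qed.

Lemma size_coker_exps k : (0 < k)%N ->
  (size (coker_exps k) + size L = size (iter_sumset k L) + (2 * k + 1))%N.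
Proof.
move=> k_gt0; rewrite /coker_exps size_map size_filter iotaD add0n count_cat.
rewrite count_coker_exp_high // size_iter_sumset_split.
by have := count_iter_sumset_lt k_gt0; have := count_coker_exp_low k_gt0; lia.
Qed.

End Frobenius.

Theorem mainTheorem5 (F : closedFieldType) (L : seq nat) :
  [pchar F] =i pred0 ->
  numerical_gaps L ->
  (1 \in L)%N -> (2 \in L)%N ->
  forall k : nat, (1 <= k)%N ->
    (exists n : nat, is_dk F L k n) /\
    (forall n : nat, is_dk F L k n ->
       n%:Z = (size (iter_sumset k L))%:Z + (2 * k + 1)%:Z - (size L)%:Z
       /\ ((2 * k * size L)%:Z < n%:Z <->
           (2 * k + 1)%:Z * ((size L)%:Z - 1) < (size (iter_sumset k L))%:Z)).
Proof.
move=> _ [L_uniq gap0 notin_add] gap1 gap2 k k_gt0.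
pose Fr := (\max_(l <- L) l)%N.
have Fr_gap : Fr \in L by apply/mem_bigmax_seq; apply: contraTneq gap1 => ->.
have Fr_max l : l \in L -> (l <= Fr)%N by move=> in_l; apply: leq_bigmax_seq.
have dkP n : is_dk F L k n <-> n = size (coker_exps L Fr k).
  apply: (quot_dimP (@coker_exps_uniq L Fr k) (@coker_exps_gamma L Fr k)) => x.
    by split=> /in_kGammaP.
  exact: in_colon_vanishing.
have := size_coker_exps gap0 Fr_gap Fr_max gap1 gap2 notin_add L_uniq k_gt0.
split=> [|n /dkP ->]; first by exists (size (coker_exps L Fr k)); apply/dkP.
by split; [lia | split=> ?; nia].
Qed.
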